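(* Let $U$ be a unitary on $\mathbb C^2\otimes\mathbb C^2$, $\alpha$ a full-rank density operator on $\mathbb C^2$ and $|\beta\rangle\in\mathbb C^2$ a unit vector. If there exist density operators $\alpha',\beta'$ on $\mathbb C^2$ with $U(\alpha\otimes|\beta\rangle\langle\beta|)U^\dagger=\alpha'\otimes\beta'$, then $U$ is a generalized thermal unitary.
   Context: A unitary $U$ on $\mathcal H_A\otimes\mathcal H_B$ is a generalized thermal unitary if there exist Hermitian operators $H_A,H_A'$ on $\mathcal H_A$ and $H_B,H_B'$ on $\mathcal H_B$, with at least one of $H_A,H_B$ not proportional to the identity, such that $U(H_A\otimes\mathbb 1+\mathbb 1\otimes H_B)U^\dagger=H_A'\otimes\mathbb 1+\mathbb 1\otimes H_B'$. *)

From HB Require Import structures.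
From mathcomp Require Import all_boot all_order all_algebra.
From mathcomp Require Import complex mxtens spectral.
From mathcomp Require Import reals.
Set Implicit Arguments.
Unset Strict Implicit.
Unset Printing Implicit Defensive.
Import Order.TTheory GRing.Theory Num.Theory.
Local Open Scope ring_scope.

Section QDefs.
Variable C : numClosedFieldType.

Definition adj {m n} (M : 'M[C]_(m, n)) : 'M[C]_(n, m) := map_mx Num.conj (M ^T).

Definition hermitian_mx {n} (A : 'M[C]_n) : Prop := adj A = A.

Definition psd_mx {n} (A : 'M[C]_n) : Prop :=
  hermitian_mx A /\ forall v : 'cV[C]_n, 0 <= (adj v *m A *m v) 0 0.

Definition density_op {n} (A : 'M[C]_n) : Prop := psd_mx A /\ \tr A = 1.

Definition full_rank {n} (A : 'M[C]_n) : Prop := \rank A = n.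

Definition unit_vector {n} (v : 'cV[C]_n) : Prop := (adj v *m v) 0 0 = 1.

Definition ketbra {n} (v : 'cV[C]_n) : 'M[C]_n := v *m adj v.

Definition unitary_mx {n} (U : 'M[C]_n) : Prop := U \is unitarymx.

Definition gen_thermal_unitary {m n} (U : 'M[C]_(m * n)) : Prop :=
  exists (HA HA' : 'M[C]_m) (HB HB' : 'M[C]_n),
    [/\ hermitian_mx HA /\ hermitian_mx HA', hermitian_mx HB /\ hermitian_mx HB',
        (~ is_scalar_mx HA \/ ~ is_scalar_mx HB) &
        U *m (tensmx HA 1%:M + tensmx 1%:M HB) *m adj U
        = tensmx HA' 1%:M + tensmx 1%:M HB'].
End QDefs.

From HB Require Import structures.
From mathcomp Require Import all_boot all_order all_algebra.
From mathcomp Require Import complex mxtens.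
From mathcomp Require Import reals.
From mathcomp Require Import spectral.
Import Order.TTheory GRing.Theory Num.Theory.
Local Open Scope ring_scope.
Set Implicit Arguments.
Unset Strict Implicit.

(* Take H_A := 0 and H_B := P := |beta><beta|; it suffices that
   Q := U (1 ⊗ P) U† is a sum of local terms.  Q is an orthogonal projector of
   trace 2, and Q = X (alpha' ⊗ beta') with X := U (alpha^-1 ⊗ 1) U†, so Q T = Q
   for every T with (alpha' ⊗ beta') T = alpha' ⊗ beta'.  As alpha ⊗ P is
   singular, so is alpha' ⊗ beta', hence alpha' or beta' is singular; by
   Cayley-Hamilton a singular 2x2 matrix of trace one is idempotent, so
   T := alpha' ⊗ 1 (or 1 ⊗ beta') is such a projector of trace 2, and two
   projectors of equal trace with Q T = Q coincide. *)

Section Mx2.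
Context {R : comNzRingType}.

Lemma char_poly_mx2 (A : 'M[R]_2) :
  char_poly A = 'X^2 - (\tr A)%:P * 'X + (\det A)%:P.
Proof.
apply/polyP => -[|[|[|i]]]; rewrite coefD coefB coefCM coefXn coefX coefC //=.
- by rewrite char_poly_det expr2 mulrNN !mul1r !mulr0 !subr0 add0r.
- by rewrite (char_poly_trace A) // mulr1 sub0r addr0.
- have := char_poly_monic A; rewrite monicE lead_coefE size_char_poly.
  by move=> /eqP ->; rewrite mulr0 subr0 addr0.
- by rewrite nth_default ?size_char_poly // mulr0 subr0 addr0.
Qed.

Lemma mx2_Cayley_Hamilton (A : 'M[R]_2) : A *m A = \tr A *: A - (\det A)%:M.
Proof.
have := Cayley_Hamilton A; rewrite char_poly_mx2 !rmorphD rmorphN !rmorphM /=.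
rewrite !horner_mx_C horner_mx_X -mulmxE mul_scalar_mx => /eqP.
by rewrite addrAC subr_eq0 => /eqP <-; rewrite addrK.
Qed.

End Mx2.

Section Adjoint.
Context {C : numClosedFieldType}.

Lemma adjM m n p (A : 'M[C]_(m, n)) (B : 'M[C]_(n, p)) :
  adj (A *m B) = adj B *m adj A.
Proof. by rewrite /adj trmx_mul map_mxM. Qed.

Lemma adjK m n (A : 'M[C]_(m, n)) : adj (adj A) = A.
Proof. by apply/matrixP=> i j; rewrite !mxE conjCK. Qed.

Lemma adj1 n : adj (1%:M : 'M[C]_n) = 1%:M.
Proof. by rewrite /adj trmx1 map_mx1. Qed.

Lemma adjB m n (A B : 'M[C]_(m, n)) : adj (A - B) = adj A - adj B.
Proof. by apply/matrixP=> i j; rewrite !mxE rmorphB. Qed.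

Lemma adj_tens m n p q (A : 'M[C]_(m, n)) (B : 'M[C]_(p, q)) :
  adj (A *t B) = adj A *t adj B.
Proof. by apply/matrixP=> i j; rewrite !mxE rmorphM. Qed.

Lemma mxtrace_tens m n (A : 'M[C]_m) (B : 'M[C]_n) :
  \tr (A *t B) = \tr A * \tr B.
Proof. by rewrite /mxtrace mulr_sum; apply: eq_bigr => k _; rewrite mxE. Qed.

Lemma mxtrace_mul_adj_eq0 m n (D : 'M[C]_(m, n)) :
  (\tr (D *m adj D) == 0) = (D == 0).
Proof.
apply/eqP/eqP => [|->]; last by rewrite mul0mx mxtrace0.
have -> : \tr (D *m adj D) = \sum_i \sum_j D i j * (D i j)^*.
  by apply: eq_bigr => i _; rewrite mxE; apply: eq_bigr => j _; rewrite !mxE.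
have normD_ge0 i j : 0 <= D i j * (D i j)^* by exact: mul_conjC_ge0.
move=> /psumr_eq0P rowD0; apply/matrixP => i j; rewrite mxE.
have /psumr_eq0P/(_ j isT) : \sum_j D i j * (D i j)^* = 0.
  by apply: rowD0 => // k _; exact: sumr_ge0.
by move=> /(_ (fun k _ => normD_ge0 i k)) /eqP; rewrite mul_conjC_eq0 => /eqP.
Qed.

End Adjoint.

Section Projector.
Context {C : numClosedFieldType}.

Definition orthoproj_mx {n} (P : 'M[C]_n) : Prop :=
  hermitian_mx P /\ P *m P = P.

Lemma orthoproj_eq n (Q T : 'M[C]_n) :
  orthoproj_mx Q -> orthoproj_mx T -> \tr Q = \tr T -> Q *m T = Q -> Q = T.
Proof.
move=> [hQ QQ] [hT TT] trQT QT.
have TQ : T *m Q = Q by rewrite -hT -hQ -adjM QT.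
have idD : (T - Q) *m (T - Q) = T - Q.
  by rewrite mulmxBl !mulmxBr TT TQ QT QQ subrr subr0.
have hD : adj (T - Q) = T - Q by rewrite adjB hT hQ.
apply/eqP; rewrite eq_sym -subr_eq0 -mxtrace_mul_adj_eq0 hD idD.
by rewrite linearB /= trQT subrr.
Qed.

Lemma orthoproj1 n : orthoproj_mx (1%:M : 'M[C]_n).
Proof. by split; [exact: adj1 | exact: mulmx1]. Qed.

Lemma orthoproj_tens m n (A : 'M[C]_m) (B : 'M[C]_n) :
  orthoproj_mx A -> orthoproj_mx B -> orthoproj_mx (A *t B).
Proof.
move=> [hA AA] [hB BB]; split; first by rewrite /hermitian_mx adj_tens hA hB.
by rewrite tensmx_mul AA BB.
Qed.

Lemma orthoproj_unitary_conj n (U P : 'M[C]_n) :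
  U \is unitarymx -> orthoproj_mx P -> orthoproj_mx (U *m P *m adj U).
Proof.
move=> /unitarymxP UU [hP PP]; have UUC : adj U *m U = 1%:M by exact: mulmx1C.
split; first by rewrite /hermitian_mx !adjM adjK hP mulmxA.
by rewrite !mulmxA -(mulmxA _ (adj U)) UUC mulmx1 -(mulmxA U) PP.
Qed.

Lemma orthoproj_ketbra n (v : 'cV[C]_n) :
  unit_vector v -> orthoproj_mx (ketbra v).
Proof.
move=> v1; have vv : adj v *m v = 1%:M by rewrite [LHS]mx11_scalar v1.
split; first by rewrite /hermitian_mx /ketbra adjM adjK.
by rewrite /ketbra mulmxA -(mulmxA v) vv mulmx1.
Qed.

Lemma mxtrace_ketbra n (v : 'cV[C]_n) : unit_vector v -> \tr (ketbra v) = 1.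
Proof.
by move=> v1; rewrite /ketbra mxtrace_mulC [adj v *m v]mx11_scalar v1 mxtrace1.
Qed.

Lemma idempotent_scalar_mx n (P : 'M[C]_n.+1) :
  P *m P = P -> is_scalar_mx P -> P = 0 \/ P = 1%:M.
Proof.
move=> PP /is_scalar_mxP [a Pa].
have aa : a * a = a.
  by move: PP; rewrite Pa -scalar_mxM => /matrixP /(_ 0 0); rewrite !mxE.
have /eqP : a * (a - 1) = 0 by rewrite mulrBr mulr1 aa subrr.
rewrite mulf_eq0 subr_eq0 => /orP [] /eqP a01; [left | right];
  by rewrite Pa a01 ?raddf0.
Qed.

Lemma orthoproj_mx2 (A : 'M[C]_2) :
  hermitian_mx A -> \tr A = 1 -> A \notin unitmx -> orthoproj_mx A.
Proof.
move=> hA trA; rewrite unitmxE unitfE negbK => /eqP detA; split => //.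
by rewrite mx2_Cayley_Hamilton trA detA scale1r raddf0 subr0.
Qed.

Lemma tensmx_projector_nonunit m n (A : 'M[C]_m) (P : 'M[C]_n) :
  (0 < m)%N -> P *m P = P -> \tr P != n%:R -> A *t P \notin unitmx.
Proof.
move=> m_gt0 PP trP; apply/negP => uAP.
have : (A *t P) *m (1%:M *t (1%:M - P)) = 0.
  by rewrite tensmx_mul mulmx1 mulmxBr PP mulmx1 subrr tensmx0.
move/(congr1 (mulmx (invmx (A *t P)))); rewrite mulKmx // mulmx0.
move/(congr1 mxtrace); rewrite mxtrace_tens linearB /= !mxtrace1 mxtrace0.
move/eqP; rewrite mulf_eq0 pnatr_eq0 eqn0Ngt m_gt0 subr_eq0 eq_sym.
by rewrite (negbTE trP).
Qed.

End Projector.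

Section ThermalUnitary.
Context {C : numClosedFieldType}.

Lemma unitary_conj_tensmx_nonunit m n (U N : 'M[C]_(m.+1 * n.+1))
    (A : 'M[C]_m.+1) (B : 'M[C]_n.+1) :
  U \is unitarymx -> U *m N *m adj U = A *t B -> N \notin unitmx ->
  A \notin unitmx \/ B \notin unitmx.
Proof.
move=> /unitarymxP UU NAB nuN.
have [uA|] := boolP (A \in unitmx); [right | by left].
move: nuN; apply: contraNN => uB.
have UUC : adj U *m U = 1%:M by exact: mulmx1C.
have -> : N = adj U *m (A *t B) *m U.
  by rewrite -NAB !mulmxA UUC mul1mx -mulmxA UUC mulmx1.
have [uU uUC] := mulmx1_unit UU.
by rewrite !unitmx_mul uUC uU tensmx_unit.
Qed.

Lemma unitary_conj_projector_eq m n (U : 'M[C]_(m * n)) (alpha : 'M[C]_m)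
    (P : 'M[C]_n) (M T : 'M[C]_(m * n)) :
  U \is unitarymx -> alpha \in unitmx -> orthoproj_mx P ->
  U *m (alpha *t P) *m adj U = M ->
  orthoproj_mx T -> \tr T = m%:R * \tr P -> M *m T = M ->
  U *m (1%:M *t P) *m adj U = T.
Proof.
move=> uU ualpha projP UM projT trT MT.
have UUC : adj U *m U = 1%:M by exact: mulmx1C (unitarymxP uU).
set X := U *m (invmx alpha *t 1%:M) *m adj U.
have QXM : U *m (1%:M *t P) *m adj U = X *m M.
  rewrite -UM /X !mulmxA -(mulmxA _ (adj U) U) UUC mulmx1.
  by rewrite -[in RHS](mulmxA U) tensmx_mul mulVmx // mul1mx.
apply: orthoproj_eq => //.
- apply: orthoproj_unitary_conj => //.
  by apply: orthoproj_tens => //; exact: orthoproj1.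
- by rewrite mxtrace_mulC mulmxA UUC mul1mx mxtrace_tens mxtrace1 trT.
- by rewrite QXM -mulmxA MT.
Qed.

Lemma gen_thermal_unitary_of_product_image (U : 'M[C]_(2 * 2))
    (alpha : 'M[C]_2) (beta : 'cV[C]_2) (alpha' beta' : 'M[C]_2) :
  U \is unitarymx -> alpha \in unitmx -> unit_vector beta ->
  hermitian_mx alpha' -> \tr alpha' = 1 -> hermitian_mx beta' -> \tr beta' = 1 ->
  U *m (alpha *t ketbra beta) *m adj U = alpha' *t beta' ->
  gen_thermal_unitary (m := 2) (n := 2) U.
Proof.
move=> uU ualpha beta1 ha' tra' hb' trb' UM.
set P := ketbra beta in UM *.
have projP : orthoproj_mx P by exact: orthoproj_ketbra.
have [hP PP] := projP.
have trP : \tr P = 1 by exact: mxtrace_ketbra.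
have P_nonscalar : ~ is_scalar_mx P.
  move/(idempotent_scalar_mx PP) => [] P01; move: trP.
    by rewrite P01 mxtrace0 => /eqP; rewrite eq_sym oner_eq0.
  by rewrite P01 mxtrace1 => /eqP; rewrite pnatr_eq1.
have herm0 : hermitian_mx (0 : 'M[C]_2).
  by apply/matrixP => i j; rewrite !mxE conjC0.
have Q_eq T : orthoproj_mx T -> \tr T = 2%:R ->
    (alpha' *t beta') *m T = alpha' *t beta' -> U *m (1%:M *t P) *m adj U = T.
  move=> projT trT; apply: (unitary_conj_projector_eq uU ualpha projP UM projT).
  by rewrite trT trP mulr1.
have alphaP_nonunit : alpha *t P \notin unitmx.
  by apply: tensmx_projector_nonunit PP _; rewrite // trP eq_sym pnatr_eq1.
case: (unitary_conj_tensmx_nonunit uU UM alphaP_nonunit).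
- move=> /(orthoproj_mx2 ha' tra') [_ a'a'].
  exists 0, alpha', P, 0; split; [by split | by split | by right |].
  rewrite tens0mx add0r tensmx0 addr0; apply: Q_eq.
  + by apply: orthoproj_tens => //; exact: orthoproj1.
  + by rewrite mxtrace_tens tra' mxtrace1 mul1r.
  + by rewrite tensmx_mul a'a' mulmx1.
- move=> /(orthoproj_mx2 hb' trb') [_ b'b'].
  exists 0, 0, P, beta'; split; [by split | by split | by right |].
  rewrite !tens0mx !add0r; apply: Q_eq.
  + by apply: orthoproj_tens => //; exact: orthoproj1.
  + by rewrite mxtrace_tens trb' mxtrace1 mulr1.
  + by rewrite tensmx_mul b'b' mulmx1.
Qed.

End ThermalUnitary.

Unset Implicit Arguments.

Theorem theorem8 (R : realType) (U : 'M[R[i]]_(2 * 2))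
  (alpha : 'M[R[i]]_2) (beta : 'cV[R[i]]_2) :
  unitary_mx U -> density_op alpha -> full_rank alpha -> unit_vector beta ->
  (exists alpha' beta' : 'M[R[i]]_2,
     [/\ density_op alpha', density_op beta' &
         U *m tensmx alpha (ketbra beta) *m adj U = tensmx alpha' beta']) ->
  gen_thermal_unitary (m := 2) (n := 2) U.
Proof.
move=> uU _ rank_alpha beta1 [a' [b'] [[[ha' _] tra'] [[hb' _] trb'] UM]].
apply: (gen_thermal_unitary_of_product_image uU _ beta1 ha' tra' hb' trb' UM).
by rewrite -row_free_unit /row_free rank_alpha.
Qed.
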